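(* Assume $\mathsf{CH}$. There is a $\mathcal{Z}$-MAD family (a MAD family $\mathcal{A}$ with $\mathcal{I}(\mathcal{A})\not\le_K\mathcal{Z}$) that is not Shelah–Stepr\={a}ns for block sequences.
   Context: $\mathcal{Z}=\{A\subseteq\omega:\lim_n|A\cap 2^n|/2^n=0\}$. A MAD family is a maximal family of infinite subsets of $\omega$ with pairwise finite intersections; $\mathcal{I}(\mathcal{A})$ is the ideal generated by $\mathcal{A}$ and finite sets. $\mathcal{I}\le_K\mathcal{J}$ (ideals on $\omega$) means there is $f:\omega\to\omega$ with $f^{-1}(A)\in\mathcal{J}$ for all $A\in\mathcal{I}$. For an ideal $\mathcal{I}$, $(\mathcal{I}^{<\omega})^+$ is the set of $X\subseteq[\omega]^{<\omega}\setminus\{\emptyset\}$ such that every $A\in\mathcal{I}$ is disjoint from some $s\in X$. A block sequence is $\{s_n:n\in\omega\}$ of nonempty finite subsets of $\omega$ with $\max s_n<\min s_{n+1}$. $\mathcal{A}$ is Shelah–Stepr\={a}ns for block sequences if for every block sequence $\{s_n\}\in(\mathcal{I}(\mathcal{A})^{<\omega})^+$ there is an infinite $W\subseteq\omega$ with $\bigcup_{n\in W}s_n\in\mathcal{I}(\mathcal{A})$. *)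

From mathcomp Require Import all_boot.
Set Implicit Arguments. Unset Strict Implicit. Unset Printing Implicit Defensive.

Definition nset := nat -> Prop.
Definition nfamily := nset -> Prop.

Definition finite_nset (A : nset) : Prop := exists N, forall x, A x -> x < N.
Definition infinite_nset (A : nset) : Prop := ~ finite_nset A.

(* The Continuum Hypothesis: every subset of P(omega) is countable (possibly
   finite or empty) or injects P(omega) into itself, i.e. has size continuum. *)
Definition CH : Prop :=
  forall X : nfamily,
    (exists f : nat -> nset, forall A, X A -> exists n, f n = A) \/
    (exists g : nset -> nset, (forall B, X (g B)) /\ injective g).

(* The density zero ideal Z = {A : lim_n |A ∩ 2^n| / 2^n = 0}, where
   2^n = {0, ..., 2^n - 1}.  "|A ∩ 2^n| <= 2^n / k" is expressed by bounding the
   size of every duplicate-free list of elements of A below 2^n. *)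
Definition Zideal : nfamily := fun A =>
  forall k, 0 < k -> exists N, forall n, N <= n ->
    forall l : seq nat, uniq l -> (forall x, x \in l -> A x /\ x < 2 ^ n) ->
      k * size l <= 2 ^ n.

Definition AD (F : nfamily) : Prop :=
  (forall a, F a -> infinite_nset a) /\
  (forall a b, F a -> F b -> a <> b -> finite_nset (fun x => a x /\ b x)).

Definition MAD (F : nfamily) : Prop :=
  AD F /\ forall G : nfamily, AD G -> (forall a, F a -> G a) -> forall a, G a -> F a.

(* I(A): the ideal generated by A and the finite sets. *)
Definition ideal_gen (F : nfamily) : nfamily := fun X =>
  exists (k : nat) (a : 'I_k -> nset) (N : nat),
    (forall i, F (a i)) /\
    forall x, X x -> x < N \/ exists i, a i x.

Definition katetov_le (I J : nfamily) : Prop :=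
  exists f : nat -> nat, forall A, I A -> J (fun x => A (f x)).

Definition block_seq (s : nat -> seq nat) : Prop :=
  (forall n, s n <> [::]) /\
  (forall n x y, x \in s n -> y \in s n.+1 -> x < y).

(* {s_n : n in omega} belongs to (I^{<omega})^+ : every member of I is disjoint
   from some s_n. *)
Definition in_fin_pos (I : nfamily) (s : nat -> seq nat) : Prop :=
  forall A, I A -> exists n, forall x, x \in s n -> ~ A x.

Definition shelah_steprans_block (F : nfamily) : Prop :=
  forall s, block_seq s -> in_fin_pos (ideal_gen F) s ->
    exists W : nset, infinite_nset W /\
      ideal_gen F (fun x => exists2 n, W n & x \in s n).

Definition Z_MAD (F : nfamily) : Prop :=
  MAD F /\ ~ katetov_le (ideal_gen F) Zideal.

(* Under CH, P(omega) carries a well-order all of whose proper initial segments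
   are countable, and the family is built by recursion along it, one set per stage.
   Cut omega into the blocks [n^2, (n+1)^2).  The invariant is that every set of the
   generated ideal is thin: it misses infinitely many blocks entirely, and for each r
   it leaves at least r points free in all but finitely many blocks.  The first
   clause makes the block sequence positive; the second forbids an infinite union of
   blocks in the ideal, so the family is not Shelah-Steprans.
   At a stage, the countably many sets built so far are dominated by an increasing
   sequence c_m of the ideal, and the new set is glued from finite pieces: the m-th
   piece avoids c_m, keeps m points free in each block it touches, and is followed by
   a block untouched by c_m and the pieces, which preserves the invariant.  Pieces are
   single points of a set X almost disjoint from the family (this yields maximality),
   or, given f : omega -> omega, one half of the free part of a range of blocks chosen
   so that f^-1 of the new set has upper density at least 1/3 (this defeats f as a
   Katetov reduction to Z). *)

From mathcomp Require Import all_boot.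
From mathcomp Require Import boolp wochoice.
From mathcomp Require Import zify.
From Stdlib Require Import Wellfounded.Inverse_Image.
Set Implicit Arguments. Unset Strict Implicit. Unset Printing Implicit Defensive.

Definition block (n : nat) : seq nat := iota (n * n) n.*2.+1.

Lemma mem_block x n : (x \in block n) = (n * n <= x < n.+1 * n.+1).
Proof. by rewrite mem_iota; congr (_ && _); apply/idP/idP; lia. Qed.

Lemma block_lt x y n n' : x \in block n -> y \in block n' -> n < n' -> x < y.
Proof. by rewrite !mem_block => /andP[_ ?] /andP[? _] ?; nia. Qed.

Lemma block_inj x n n' : x \in block n -> x \in block n' -> n = n'.
Proof.
move=> xn xn'; case: (ltngtP n n') => // ltn.
- by have := block_lt xn xn' ltn; rewrite ltnn.
- by have := block_lt xn' xn ltn; rewrite ltnn.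
Qed.

Lemma block_of x : exists n, x \in block n.
Proof.
elim: x => [|x [n]]; first by exists 0.
rewrite mem_block => /andP[lo hi]; case: (ltnP x.+1 (n.+1 * n.+1)) => hx.
- by exists n; rewrite mem_block hx andbT; lia.
- by exists n.+1; rewrite mem_block hx /=; nia.
Qed.

Lemma block_ge x n : x \in block n -> n <= x.
Proof. by rewrite mem_block => /andP[? _]; nia. Qed.

Lemma block_index_ge x n L : x \in block n -> L * L <= x -> L <= n.
Proof. by rewrite mem_block => /andP[_ ?] ?; nia. Qed.

Lemma block_index_lt x n R : x \in block n -> x < R * R -> n < R.
Proof. by rewrite mem_block => /andP[? _] ?; nia. Qed.

Lemma block_seq_block : block_seq block.
Proof. by split=> [n | n x y xn yn]; [|apply: block_lt xn yn _]. Qed.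

Definition free_part (U : nset) (n : nat) : seq nat := [seq x <- block n | ~~ `[< U x >]].

Lemma mem_free_part U n x : (x \in free_part U n) = (x \in block n) && ~~ `[< U x >].
Proof. by rewrite mem_filter andbC. Qed.

Lemma free_part_uniq U n : uniq (free_part U n).
Proof. exact/filter_uniq/iota_uniq. Qed.

Lemma size_free_part_le U V n : (forall x, x \in block n -> V x -> U x) ->
  size (free_part U n) <= size (free_part V n).
Proof.
move=> VU; apply: uniq_leq_size (free_part_uniq U n) _ => x.
rewrite !mem_free_part => /andP[xn /asboolPn xU]; rewrite xn.
by apply/asboolPn => /(VU x xn).
Qed.

Definition thin (U : nset) : Prop :=
  (forall N, exists2 n, N <= n & forall x, x \in block n -> ~ U x) /\
  (forall r, exists N, forall n, N <= n -> r <= size (free_part U n)).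

Lemma thin_sub U V : (forall x, V x -> U x) -> thin U -> thin V.
Proof.
move=> VU [avoid many]; split=> [N | r].
  by have [n Nn nU] := avoid N; exists n => // x /nU + /VU.
have [N hN] := many r; exists N => n /hN /leq_trans; apply.
by apply: size_free_part_le => x _ /VU.
Qed.

Lemma thin_with_initial_segment U M : thin U -> thin (fun x => x < M \/ U x).
Proof.
have far n x : M <= n -> x \in block n -> ~ x < M by move=> ? /block_ge; lia.
move=> [avoid many]; split=> [N | r].
  have [n Nn nU] := avoid (maxn N M); exists n; first lia.
  by move=> x xn [|]; [apply: far xn; lia | apply: nU].
have [N hN] := many r; exists (maxn N M) => n Nn.
apply: leq_trans (hN n _) _; first lia.
by apply: size_free_part_le => x xn [|//] /(far n x); case; lia.
Qed.

Lemma thin0 : thin (fun _ => False).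
Proof.
split=> [N | r]; first by exists N => // x _ [].
exists r => n rn; suff -> : free_part (fun _ => False) n = block n by rewrite size_iota; lia.
by apply/all_filterP/allP => x _; apply/asboolPn.
Qed.

Definition thin_ideal (B : nfamily) : Prop := forall U, ideal_gen B U -> thin U.

Definition almost_disjoint_from (B : nfamily) (a : nset) : Prop :=
  forall b, B b -> finite_nset (fun x => a x /\ b x).

Section IdealGen.
Variable B : nfamily.

Lemma ideal_gen_sub U V : (forall x, V x -> U x) -> ideal_gen B U -> ideal_gen B V.
Proof. by move=> VU [k [a [N [Ba hU]]]]; exists k, a, N; split=> // x /VU /hU. Qed.

Lemma ideal_gen_initial_segment M : ideal_gen B (fun x => x < M).
Proof. by exists 0, (fun _ _ => False), M; split=> [[] // | x]; left. Qed.

Lemma ideal_gen_mem a : B a -> ideal_gen B a.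
Proof. by move=> Ba; exists 1, (fun _ => a), 0; split=> // x ax; right; exists ord0. Qed.

Lemma ideal_genU U V : ideal_gen B U -> ideal_gen B V -> ideal_gen B (fun x => U x \/ V x).
Proof.
move=> [k [a [N [Ba hU]]]] [k' [a' [N' [Ba' hV]]]].
exists (k + k'), (fun i => match split i with inl j => a j | inr j => a' j end), (maxn N N').
split=> [i | x [/hU | /hV]]; first by case: (split i).
- by case=> [|[j aj]]; [left; lia | right; exists (unsplit (inl j)); rewrite unsplitK].
- by case=> [|[j aj]]; [left; lia | right; exists (unsplit (inr j)); rewrite unsplitK].
Qed.

Lemma ideal_gen_almost_disjoint X U :
  almost_disjoint_from B X -> ideal_gen B U -> finite_nset (fun x => X x /\ U x).
Proof.
move=> adX [k [a [N [Ba hU]]]].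
have [M hM] := choice (fun i => adX _ (Ba i)).
exists (maxn N (\max_i M i)) => x [Xx /hU [|[i aix]]]; first lia.
by have := hM i x (conj Xx aix); have := leq_bigmax (F := M) i; lia.
Qed.

Lemma ideal_gen_cover (c : nat -> nset) U :
  (forall m m' x, m <= m' -> c m x -> c m' x) ->
  (forall b, B b -> exists m, forall x, b x -> c m x) ->
  ideal_gen B U -> exists N m, forall x, U x -> x < N \/ c m x.
Proof.
move=> c_mono cover [k [a [N [Ba hU]]]].
have [m hm] := choice (fun i => cover _ (Ba i)).
exists N, (\max_i m i) => x /hU [|[i aix]]; [by left | right].
exact: c_mono (leq_bigmax (F := m) i) (hm i x aix).
Qed.

End IdealGen.

Lemma ideal_gen_mono (B B' : nfamily) U :
  (forall b, B b -> B' b) -> ideal_gen B U -> ideal_gen B' U.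
Proof. by move=> BB' [k [a [N [Ba hU]]]]; exists k, a, N; split=> // i; apply: BB'. Qed.

Definition cofinal_seq (B : nfamily) (c : nat -> nset) : Prop :=
  [/\ forall m m' x, m <= m' -> c m x -> c m' x,
      forall m, ideal_gen B (c m) &
      forall b, B b -> exists m, forall x, b x -> c m x].

Lemma cofinal_seq_of_enum (B : nfamily) (h : nat -> nset) :
  (forall i, ideal_gen B (h i)) -> (forall b, B b -> exists i, h i = b) ->
  exists c, cofinal_seq B c.
Proof.
move=> Bh enum; exists (fun m x => exists2 i, i <= m & h i x); split.
- by move=> m m' x mm' [i im hix]; exists i => //; lia.
- elim=> [|m IHm].
    by apply: ideal_gen_sub (Bh 0) => x [i]; rewrite leqn0 => /eqP->.
  apply: ideal_gen_sub (ideal_genU IHm (Bh m.+1)) => x [i].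
  by rewrite leq_eqVlt ltnS => /orP[/eqP-> | im] hix; [right | left; exists i].
- by move=> b /enum [i <-]; exists i => x hix; exists i.
Qed.

Lemma thin_ideal_extend (B : nfamily) (c : nat -> nset) (a : nset) :
  cofinal_seq B c ->
  (forall j, finite_nset (fun x => a x /\ c j x)) ->
  (forall j, thin (fun x => a x \/ c j x)) ->
  almost_disjoint_from B a /\ thin_ideal (fun b => B b \/ b = a).
Proof.
move=> [c_mono _ cover] ac_fin ac_thin; split.
  move=> b /cover [m bc]; have [N hN] := ac_fin m.
  by exists N => x [ax /bc cx]; apply: hN.
move=> U /ideal_gen_cover hU.
have [|b [/cover [m bc] | ->]|N [m hm]] := hU (fun m x => a x \/ c m x).
- by move=> m m' x mm' [|/(c_mono _ _ _ mm')]; [left | right].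
- by exists m => x /bc; right.
- by exists 0 => x; left.
apply: thin_sub hm (thin_with_initial_segment N (ac_thin m)).
Qed.

Record piece := Piece { piece_lo : nat; piece_hi : nat; piece_set : nset }.

Definition piece_spec (U : nset) (r lb : nat) (P : piece) : Prop :=
  let: Piece L R p := P in
  [/\ lb <= L <= R,
      (forall x, p x -> L * L <= x < R * R /\ ~ U x) &
      forall n, L <= n < R -> r <= size (free_part (fun x => U x \/ p x) n)].

Section Gluing.
Variables (c : nat -> nset) (Q : nat -> nset -> Prop).
Hypothesis c_mono : forall m m' x, m <= m' -> c m x -> c m' x.
Hypothesis c_thin : forall m, thin (c m).
Hypothesis piece_ex : forall m lb, exists2 P, piece_spec (c m) m lb P & Q m (piece_set P).

Let gap m N : nat := s2val (cid2 ((c_thin m).1 N)).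

Let gapP m N : N <= gap m N /\ forall x, x \in block (gap m N) -> ~ c m x.
Proof. by rewrite /gap; case: cid2. Qed.

Let piece_from m lb : piece := s2val (cid2 (piece_ex m lb)).

Let piece_fromP m lb :
  piece_spec (c m) m lb (piece_from m lb) /\ Q m (piece_set (piece_from m lb)).
Proof. by rewrite /piece_from; case: cid2. Qed.

(* Piece [m.+1] starts beyond a block, after piece [m], that [c m] misses; no piece
   meets these blocks. *)
Let start : nat -> nat :=
  fix start m := if m is m'.+1 then (gap m' (piece_hi (piece_from m' (start m')))).+1 else 0.

Let L m := piece_lo (piece_from m (start m)).
Let R m := piece_hi (piece_from m (start m)).
Let p m := piece_set (piece_from m (start m)).
Let e m := gap m (R m).

Let pieceP m : [/\ start m <= L m <= R m,
  (forall x, p m x -> L m * L m <= x < R m * R m /\ ~ c m x),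
  (forall n, L m <= n < R m -> m <= size (free_part (fun x => c m x \/ p m x) n)) &
  Q m (p m)].
Proof.
have [] := piece_fromP m (start m); rewrite /L /R /p.
by case: (piece_from m (start m)) => ? ? ? /= [].
Qed.

Let hi_le_gap m : R m <= e m.
Proof. exact: (gapP m (R m)).1. Qed.

Let gap_lt_lo m m' : m < m' -> e m < L m'.
Proof.
elim: m' => // m' IH mm'; have [/andP[lo _] _ _ _] := pieceP m'.+1.
have start_succ : start m'.+1 = (e m').+1 by [].
rewrite start_succ in lo; move: mm'; rewrite ltnS leq_eqVlt => /orP[/eqP-> | /IH]; first lia.
by have [/andP[_ ?] _ _ _] := pieceP m'; have := hi_le_gap m'; lia.
Qed.

Let hi_lt_lo m m' : m < m' -> R m < L m'.
Proof. by move=> /gap_lt_lo; have := hi_le_gap m; lia. Qed.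

Let index_le_lo m : m <= L m.
Proof.
elim: m => // m IH; have := gap_lt_lo (ltnSn m).
by have [/andP[_ ?] _ _ _] := pieceP m; have := hi_le_gap m; lia.
Qed.

Let piece_in_range m x n : p m x -> x \in block n -> L m <= n < R m.
Proof.
have [_ inside _ _] := pieceP m => /inside [/andP[lo hi] _] xn.
by rewrite (block_index_ge xn lo) (block_index_lt xn hi).
Qed.

Let range_inj m m' n : L m <= n < R m -> L m' <= n < R m' -> m = m'.
Proof.
move=> mn m'n; case: (ltngtP m m') => // /hi_lt_lo; lia.
Qed.

Let glued : nset := fun x => exists m, p m x.

Let glued_meet_finite j : finite_nset (fun x => glued x /\ c j x).
Proof.
exists (L j * L j) => x [[m pmx] cjx]; have [_ inside _ _] := pieceP m.
have [/andP[_ hi] ncm] := inside x pmx; case: (ltnP m j) => [/hi_lt_lo | jm]; first by nia.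
by case: ncm; apply: c_mono jm cjx.
Qed.

Let glued_thin j : thin (fun x => glued x \/ c j x).
Proof.
split=> [N | r].
  have [m Nm jm] : exists2 m, N <= m & j <= m by exists (maxn N j); lia.
  have [/andP[_ LR] _ _ _] := pieceP m; have := hi_le_gap m.
  exists (e m) => [|x xe [[m' pm'x] | cjx]]; first by have := index_le_lo m; lia.
    have := piece_in_range pm'x xe.
    by case: (ltngtP m' m) => [/hi_lt_lo | /gap_lt_lo | ->]; lia.
  by have := (gapP m (R m)).2 x xe; apply; apply: c_mono cjx.
have [N1 hN1] := (c_thin j).2 r.
exists (maxn (L (maxn r j)) N1) => n Nn.
have [[m mn] | none] := pselect (exists m, L m <= n < R m).
  have jm : maxn r j <= m by case: (ltnP m (maxn r j)) => // /hi_lt_lo; lia.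
  have [_ _ many _] := pieceP m.
  apply: leq_trans (_ : r <= m) (leq_trans (many n mn) _); first lia.
  apply: size_free_part_le => x xn [[m' pm'x] | cjx]; last by left; apply: c_mono cjx; lia.
  by right; rewrite (range_inj mn (piece_in_range pm'x xn)).
apply: leq_trans (hN1 n _) _; first lia.
apply: size_free_part_le => x xn [[m' pm'x] | //].
by case: none; exists m'; apply: piece_in_range pm'x xn.
Qed.

Lemma glue : exists a : nset,
  [/\ forall j, finite_nset (fun x => a x /\ c j x),
      forall j, thin (fun x => a x \/ c j x),
      (forall m, exists2 q, Q m q & forall x, q x -> a x) &
      forall x, a x -> exists m q, Q m q /\ q x].
Proof.
exists glued; split=> [||m|x [m pmx]]; [exact: glued_meet_finite | exact: glued_thin | |].
- by exists (p m) => [|x pmx]; [case: (pieceP m) | exists m].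
- by exists m, (p m); case: (pieceP m).
Qed.

End Gluing.

Definition half (b : bool) (s : seq nat) : seq nat :=
  if b then take (size s %/ 2) s else drop (size s %/ 2) s.

Lemma mem_half b s y : y \in half b s -> y \in s.
Proof. by case: b => /=; [apply: mem_take | apply: mem_drop]. Qed.

Lemma half_uniq b s : uniq s -> uniq (half b s).
Proof. by case: b => /=; [apply: take_uniq | apply: drop_uniq]. Qed.

Lemma halves_disjoint b s y : uniq s -> y \in half b s -> y \notin half (~~ b) s.
Proof.
rewrite -{1}(cat_take_drop (size s %/ 2) s) cat_uniq => /and3P[_ /hasPn disj _].
by case: b => /= y_in; apply/negP => y_in';
  [move: (disj y y_in'); rewrite y_in | move: (disj y y_in); rewrite y_in'].
Qed.

Lemma halves_cover s y : y \in s -> y \in half true s \/ y \in half false s.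
Proof. by rewrite -{1}(cat_take_drop (size s %/ 2) s) mem_cat => /orP[]; [left | right]. Qed.

Lemma size_half b s r : r.*2 <= size s -> r <= size (half b s).
Proof. by case: b; rewrite /= (size_take, size_drop); case: ltnP; lia. Qed.

Definition half_piece (U : nset) (L R : nat) (b : bool) : piece :=
  Piece L R (fun y => exists2 n, L <= n < R & y \in half b (free_part U n)).

Lemma half_piece_spec U r lb L R b : lb <= L <= R ->
  (forall n, L <= n < R -> r.*2 <= size (free_part U n)) ->
  piece_spec U r lb (half_piece U L R b).
Proof.
move=> LR large; split=> // [x [n /andP[Ln nR] /mem_half] | n nLR].
  rewrite mem_free_part => /andP[xn /asboolP Ux]; split=> //.
  by move: xn; rewrite mem_block => /andP[? ?]; apply/andP; split; nia.
apply: leq_trans (size_half (~~ b) (large n nLR)) _.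
apply: uniq_leq_size (half_uniq _ (free_part_uniq _ _)) _ => y y_other.
have := mem_half y_other; rewrite !mem_free_part => /andP[yn /asboolP Uy].
rewrite yn; apply/asboolP => -[// | [n' _ y_this]].
have := mem_half y_this; rewrite mem_free_part => /andP[/(block_inj yn) eqn _]; subst n'.
by move: y_other; rewrite (negPf (halves_disjoint (free_part_uniq U n) y_this)).
Qed.

Lemma half_pieces_cover U L R y : L * L <= y -> y < R -> ~ U y ->
  piece_set (half_piece U L R true) y \/ piece_set (half_piece U L R false) y.
Proof.
move=> Ly yR Uy; have [n yn] := block_of y.
have nLR : L <= n < R by rewrite (block_index_ge yn Ly); have := block_ge yn; lia.
have : y \in free_part U n by rewrite mem_free_part yn; apply/asboolP.
by case/halves_cover; [left | right]; exists n.
Qed.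

Lemma size_free_part_add1 U x n :
  (size (free_part U n)).-1 <= size (free_part (fun y => U y \/ y = x) n).
Proof.
set s := free_part U n; have s_uniq : uniq s := free_part_uniq U n.
apply: (@leq_trans (size (filter (predC1 x) s))).
  have : count_mem x s + count (predC1 x) s = size s := count_predC (pred1 x) s.
  by rewrite size_filter (count_uniq_mem x s_uniq); case: (x \in s) => /=; lia.
apply: uniq_leq_size (filter_uniq _ s_uniq) _ => y.
rewrite mem_filter !mem_free_part => /andP[/= yx /andP[-> /asboolP Uy]].
by apply/asboolP => -[// | /eqP]; rewrite (negPf yx).
Qed.

Lemma point_piece U r lb : thin U -> exists2 L, lb <= L &
  forall x n, L * L <= x -> x \in block n -> ~ U x ->
    piece_spec U r lb (Piece L n.+1 (fun y => y = x)).
Proof.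
move=> [_ many]; have [N hN] := many r.+1.
exists (maxn lb N) => [|x n Lx xn Ux]; first lia.
have Ln := block_index_ge xn Lx; split.
- by apply/andP; split; lia.
- by move=> y ->; split=> //; rewrite Lx; move: xn; rewrite mem_block => /andP[].
- move=> n' /andP[Ln' _].
  by have := size_free_part_add1 U x n'; have := hN n'; lia.
Qed.

Lemma count_sub_in (T : eqType) (a1 a2 : pred T) (s : seq T) :
  {in s, subpred a1 a2} -> count a1 s <= count a2 s.
Proof.
move=> sub; have -> : count a1 s = count (predI a1 a2) s.
  by apply: eq_in_count => x /sub; rewrite /=; case: (a1 x) => // ->.
by apply: sub_count => x /andP[].
Qed.

Definition density_count (A : nset) (n : nat) : nat :=
  count (fun i => `[< A i >]) (iota 0 (2 ^ n)).

Lemma density_count_le (A A' : nset) n :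
  (forall i, A i -> A' i) -> density_count A n <= density_count A' n.
Proof. by move=> AA'; apply: sub_count => i /asboolP /AA' /asboolP. Qed.

Lemma Zideal_density A k : Zideal A -> 0 < k ->
  exists N, forall n, N <= n -> k * density_count A n <= 2 ^ n.
Proof.
move=> ZA k0; have [N hN] := ZA k k0; exists N => n Nn.
rewrite /density_count -size_filter; apply: hN => //; first exact/filter_uniq/iota_uniq.
by move=> x; rewrite mem_filter mem_iota => /andP[/asboolP Ax /andP[_ xn]].
Qed.

Lemma Zideal_sub A A' : (forall x, A' x -> A x) -> Zideal A -> Zideal A'.
Proof.
move=> A'A ZA k k0; have [N hN] := ZA k k0; exists N => n Nn l l_uniq l_sub.
by apply: hN => // x /l_sub [/A'A].
Qed.

Lemma dense_piece U (f : nat -> nat) r lb N0 : thin U ->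
  (forall M, Zideal (fun i => f i < M \/ U (f i))) ->
  exists2 P, piece_spec U r lb P &
    exists2 N, N0 <= N & 2 ^ N < 3 * density_count (fun i => piece_set P (f i)) N.
Proof.
move=> [_ many] small; have [N1 hN1] := many r.*2.
have [L lbL N1L] : exists2 L, lb <= L & N1 <= L by exists (maxn lb N1); lia.
have [N2 hN2] := Zideal_density (small (L * L)) (isT : 0 < 8).
have [N N2N N0N] : exists2 N, N2 <= N & N0 <= N by exists (maxn N2 N0); lia.
pose R := maxn L (\max_(i < 2 ^ N) f i).+1.
have f_lt_R i : i < 2 ^ N -> f i < R.
  move=> iN; suff : f i <= \max_(j < 2 ^ N) f j by rewrite /R; lia.
  exact: (leq_bigmax (F := fun j : 'I_(2 ^ N) => f j) (Ordinal iN)).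
have spec b : piece_spec U r lb (half_piece U L R b).
  by apply: half_piece_spec => [|n /andP[Ln _]]; [lia | apply: hN1; lia].
pose cnt b := density_count (fun i => piece_set (half_piece U L R b) (f i)) N.
have covered :
    2 ^ N <= density_count (fun i => f i < L * L \/ U (f i)) N + (cnt true + cnt false).
  rewrite -[X in X <= _](size_iota 0) -(count_predC (fun i => `[< f i < L * L \/ U (f i) >])).
  rewrite leq_add2l /cnt /density_count -count_predUI; apply: leq_trans (leq_addr _ _).
  apply: count_sub_in => i; rewrite mem_iota => /andP[_ iN] /asboolPn small_i /=.
  have Lfi : L * L <= f i by case: leqP => // ?; case: small_i; left.
  have Ufi : ~ U (f i) by move=> ?; apply: small_i; right.
  by have [h|h] := half_pieces_cover Lfi (f_lt_R i iN) Ufi;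
    apply/orP; [left | right]; apply/asboolP.
have sparse := hN2 N N2N; have pos := expn_gt0 2 N.
(* At most 1/8 of [0, 2^N) is mapped below [L * L] or into [U], the rest into one of
   the two halves, so one half receives more than 1/3 of it. *)
have [true_wins | false_wins] := leqP (cnt false) (cnt true).
- by exists (half_piece U L R true) => //; exists N => //; rewrite -/(cnt true); lia.
- by exists (half_piece U L R false) => //; exists N => //; rewrite -/(cnt false); lia.
Qed.

Lemma extend_not_katetov (B : nfamily) c (f : nat -> nat) :
  cofinal_seq B c -> thin_ideal B ->
  (forall A, ideal_gen B A -> Zideal (fun i => A (f i))) ->
  exists a, [/\ infinite_nset a, almost_disjoint_from B a,
    thin_ideal (fun b => B b \/ b = a) & ~ Zideal (fun i => a (f i))].
Proof.
move=> c_cof B_thin katetov; have [c_mono c_ideal _] := c_cof.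
have c_thin m : thin (c m) by apply: B_thin.
pose Q m (p : nset) :=
  exists2 N, m <= N & 2 ^ N < 3 * density_count (fun i => p (f i)) N.
have [|a [ac_fin ac_thin Qa _]] := glue (Q := Q) c_mono c_thin.
  move=> m lb; have [M | P] := dense_piece (f := f) m lb m (c_thin m); last by exists P.
  apply: (katetov (fun x => x < M \/ c m x)).
  exact: ideal_genU (ideal_gen_initial_segment B M) (c_ideal m).
have [a_ad a_thin] := thin_ideal_extend c_cof ac_fin ac_thin.
have a_not_Z : ~ Zideal (fun i => a (f i)).
  move=> /Zideal_density /(_ (isT : 0 < 3)) [N0 hN0]; have [p [N N0N dense] pa] := Qa N0.
  by have := hN0 N N0N; have := density_count_le N (fun i => pa (f i)); lia.
exists a; split=> // -[M aM]; apply: a_not_Z.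
by apply: Zideal_sub (katetov _ (ideal_gen_initial_segment B M)) => i /aM.
Qed.

Lemma extend_inside (B : nfamily) c (X : nset) :
  cofinal_seq B c -> thin_ideal B -> infinite_nset X -> almost_disjoint_from B X ->
  exists a, [/\ infinite_nset a, almost_disjoint_from B a,
    thin_ideal (fun b => B b \/ b = a) & forall x, a x -> X x].
Proof.
move=> c_cof B_thin X_inf X_ad; have [c_mono c_ideal _] := c_cof.
have c_thin m : thin (c m) by apply: B_thin.
have X_escapes m M : exists x, [/\ M <= x, X x & ~ c m x].
  have [N hN] := ideal_gen_almost_disjoint X_ad (c_ideal m).
  apply: contrapT => none; apply: X_inf; exists (maxn M N) => x Xx.
  have [cx|cx] := pselect (c m x); first by have := hN x (conj Xx cx); lia.
  by case: (ltnP x M) => [|Mx]; [lia | case: none; exists x].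
pose Q m (p : nset) := (forall x, p x -> X x) /\ exists2 x, m <= x & p x.
have [|a [ac_fin ac_thin Qa aQ]] := glue (Q := Q) c_mono c_thin.
  move=> m lb; have [L lbL point] := point_piece m lb (c_thin m).
  have [x [Lx Xx cx]] := X_escapes m (maxn (L * L) m); have [n xn] := block_of x.
  exists (Piece L n.+1 (fun y => y = x)); first by apply: point => //; lia.
  by split=> [y -> // |]; exists x => //; lia.
have [a_ad a_thin] := thin_ideal_extend c_cof ac_fin ac_thin.
exists a; split=> // [[N aN] | x /aQ [m [p [[pX _] px]]]]; last exact: pX.
by have [p [_ [x Nx px]] pa] := Qa N; have := aN x (pa x px); lia.
Qed.

Lemma ord_argmax (T : Type) (R : T -> T -> Prop) :
  (forall y z, R y z \/ R z y) -> (forall y z w, R y z -> R z w -> R y w) ->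
  forall k (y : 'I_k.+1 -> T), exists i, forall j, R (y j) (y i).
Proof.
move=> R_total R_trans; elim=> [|k IH] y.
  by exists ord0 => j; rewrite ord1; case: (R_total (y ord0) (y ord0)).
have [i imax] := IH (fun j => y (lift ord0 j)).
have [R0i | Ri0] := R_total (y ord0) (y (lift ord0 i)).
- by exists (lift ord0 i) => j; case: (unliftP ord0 j) => [j' -> | ->].
- exists ord0 => j; case: (unliftP ord0 j) => [j' -> | ->].
    exact: R_trans (imax j') Ri0.
  by case: (R_total (y ord0) (y ord0)).
Qed.

Lemma thin_ideal_sub (B B' : nfamily) :
  thin_ideal B -> (forall b, B' b -> B b) -> thin_ideal B'.
Proof. by move=> B_thin B'B U /(ideal_gen_mono B'B) /B_thin. Qed.

Lemma thin_ideal_chain (I : Type) (R : I -> I -> Prop) (S : I -> Prop) (C : I -> nfamily) :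
  (forall y z, R y z \/ R z y) -> (forall y z w, R y z -> R z w -> R y w) ->
  (forall y z b, R y z -> C y b -> C z b) -> (forall y, S y -> thin_ideal (C y)) ->
  thin_ideal (fun b => exists y, S y /\ C y b).
Proof.
move=> R_total R_trans C_mono C_thin U [[|k] [a [N [Ca hU]]]].
  apply: thin_sub (thin_with_initial_segment N thin0) => x /hU [|[[]] //]; by left.
have [y yP] := choice Ca; have [i imax] := ord_argmax R_total R_trans y.
apply: (C_thin _ (yP i).1); exists k.+1, a, N; split=> // j.
exact: C_mono (imax j) (yP j).2.
Qed.

(* A stage [x] doubles as a task: if [x 0], then [task_data x] codes the graph of a
   map to be defeated as a Katetov reduction to [Zideal]; otherwise the new set must
   lie inside [task_data x]. *)
Definition task (b : Prop) (X : nset) : nset := fun k => if k is k'.+1 then X k' else b.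

Definition task_data (x : nset) : nset := fun k => x k.+1.

Definition graph (f : nat -> nat) : nset := fun k => exists n, k = pickle (n, f n).

Definition decode (X : nset) (n : nat) : nat :=
  if pselect (exists m, X (pickle (n, m))) is left ex then projT1 (cid ex) else 0.

Lemma decode_graph f : decode (graph f) = f.
Proof.
apply: funext => n; rewrite /decode; case: pselect => [ex | []]; last by exists (f n), n.
by case: (cid ex) => m /= [n' /(pcan_inj pickleK) [-> ->]].
Qed.

Definition good (B : nfamily) (x a : nset) : Prop :=
  [/\ infinite_nset a, almost_disjoint_from B a, thin_ideal (fun b => B b \/ b = a),
      x 0 -> ~ Zideal (fun i => a (decode (task_data x) i)) &
      ~ x 0 -> forall y, a y -> task_data x y].

Lemma good_inside (B : nfamily) c (X : nset) :
  cofinal_seq B c -> thin_ideal B -> infinite_nset X -> almost_disjoint_from B X ->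
  exists a, good B (task False X) a.
Proof.
move=> c_cof B_thin X_inf X_ad.
by have [a [? ? ? ?]] := extend_inside c_cof B_thin X_inf X_ad; exists a.
Qed.

Lemma good_not_katetov (B : nfamily) c (f : nat -> nat) :
  cofinal_seq B c -> thin_ideal B ->
  (forall A, ideal_gen B A -> Zideal (fun i => A (f i))) ->
  exists a, good B (task True (graph f)) a.
Proof.
move=> c_cof B_thin katetov.
have [a [? ? ? a_not_Z]] := extend_not_katetov c_cof B_thin katetov.
exists a; split=> // [_ | /(_ I) []].
by rewrite -[task_data _]/(graph f) decode_graph.
Qed.

Definition choose_good (B : nfamily) (x : nset) : option nset :=
  if pselect (exists a, good B x a) is left ex then Some (projT1 (cid ex)) else None.

Variant choose_good_spec (B : nfamily) (x : nset) : option nset -> Prop :=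
  | ChooseGood a of good B x a : choose_good_spec B x (Some a)
  | ChooseNone of ~ (exists a, good B x a) : choose_good_spec B x None.

Lemma choose_goodP B x : choose_good_spec B x (choose_good B x).
Proof.
by rewrite /choose_good; case: pselect => [ex | ?]; [case: cid => a /= |]; constructor.
Qed.

Definition countable_family (X : nfamily) : Prop :=
  exists f : nat -> nset, forall A, X A -> exists n, f n = A.

Section Recursion.
Variable prec : nset -> nset -> Prop.
Hypothesis prec_wf : well_founded prec.
Hypothesis prec_trans : forall x y z, prec x y -> prec y z -> prec x z.
Hypothesis prec_total : forall x y, x <> y -> prec x y \/ prec y x.
Hypothesis prec_countable : forall x, countable_family (fun y => prec y x).

Let preceq x y := prec x y \/ x = y.

Let preceq_total x y : preceq x y \/ preceq y x.
Proof.
have [-> | xy] := pselect (x = y); first by left; right.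
by case: (prec_total xy); [left | right]; left.
Qed.

Let preceq_trans x y z : preceq x y -> preceq y z -> preceq x z.
Proof. by move=> [xy | ->] [yz | <-]; [left; apply: prec_trans yz | left | left | right]. Qed.

Definition stage : nset -> option nset :=
  Fix prec_wf (fun _ => option nset)
    (fun x rec => choose_good (fun a => exists y (yx : prec y x), rec y yx = Some a) x).

Definition before (x : nset) : nfamily := fun a => exists2 y, prec y x & stage y = Some a.

Definition upto (x : nset) : nfamily := fun a => before x a \/ stage x = Some a.

Definition family : nfamily := fun a => exists y, stage y = Some a.

Lemma stageE x : stage x = choose_good (before x) x.
Proof.
rewrite /stage Fix_eq => [|x' rec rec' eq_rec]; congr choose_good; apply: funext => a.
  by apply: propext; split=> [[y [yx ya]] | [y yx ya]]; exists y => //; exists yx.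
by apply: propext; split=> -[y [yx ya]]; exists y, yx; rewrite ?eq_rec // -eq_rec.
Qed.

Lemma upto_mono x y a : preceq x y -> upto x a -> upto y a.
Proof.
move=> [xy | <-] // [[z zx za] | xa]; left; last by exists x.
by exists z => //; apply: prec_trans zx xy.
Qed.

Lemma upto_thin x : thin_ideal (upto x).
Proof.
elim/(well_founded_ind prec_wf): x => x IH.
have before_thin : thin_ideal (before x).
  apply: (thin_ideal_sub (thin_ideal_chain preceq_total preceq_trans upto_mono IH)).
  by move=> a [y yx ya]; exists y; split=> //; right.
rewrite /upto stageE; case: choose_goodP => [a [_ _ a_thin _ _] | _]; last first.
  by apply: (thin_ideal_sub before_thin) => a [].
by apply: (thin_ideal_sub a_thin) => b [|[->]]; [left | right].
Qed.

Lemma before_thin x : thin_ideal (before x).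
Proof. by apply: (thin_ideal_sub (@upto_thin x)) => a; left. Qed.

Lemma family_thin : thin_ideal family.
Proof.
apply: (thin_ideal_sub (@thin_ideal_chain _ preceq (fun _ => True) upto preceq_total
  preceq_trans upto_mono (fun y _ => @upto_thin y))).
by move=> a [y ya]; exists y; split=> //; right.
Qed.

Lemma before_family x a : before x a -> family a.
Proof. by move=> [y _ ya]; exists y. Qed.

Lemma before_cofinal x : exists c, cofinal_seq (before x) c.
Proof.
have [g g_enum] := prec_countable x.
pose h i : nset := if pselect (prec (g i) x) is left _ then
  (if stage (g i) is Some a then a else fun _ => False) else fun _ => False.
have empty : ideal_gen (before x) (fun _ => False).
  by apply: ideal_gen_sub (ideal_gen_initial_segment _ 0).
apply: (@cofinal_seq_of_enum _ h) => [i | a [y yx ya]].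
  rewrite /h; case: pselect => // gx; case e: (stage (g i)) => [a|] //.
  by apply: ideal_gen_mem; exists (g i).
have [i gi] := g_enum y yx; exists i; rewrite /h gi ya; case: pselect => //.
Qed.

Lemma stage_good x a : stage x = Some a -> good (before x) x a.
Proof. by rewrite stageE; case: choose_goodP => // a' a'_good [<-]. Qed.

Lemma stage_some x : (exists a, good (before x) x a) -> exists a, stage x = Some a.
Proof. by rewrite stageE; case: choose_goodP => [a _ _ | ? ?]; [exists a |]. Qed.

Lemma family_AD : AD family.
Proof.
split=> [a [x /stage_good [] //] | a b [x xa] [y yb] ab].
have xy : x <> y by move=> exy; apply: ab; move: xa; rewrite exy yb => -[].
case: (prec_total xy) => [xy_prec | yx_prec].
- have [_ b_ad _ _ _] := stage_good yb; have [N hN] := b_ad a (ex_intro2 _ _ x xy_prec xa).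
  by exists N => z [az bz]; apply: hN.
- by have [_ a_ad _ _ _] := stage_good xa; apply: a_ad; exists y.
Qed.

Lemma family_MAD : MAD family.
Proof.
split=> [|G [G_inf G_ad] FG b Gb]; first exact: family_AD.
apply: contrapT => b_new; pose x := task False b.
have b_ad : almost_disjoint_from (before x) b.
  move=> a /before_family Fa; apply: (G_ad _ _ Gb (FG _ Fa)) => ba.
  by apply: b_new; rewrite ba.
have [c c_cof] := before_cofinal x.
have [a xa] := stage_some (good_inside c_cof (@before_thin x) (G_inf b Gb) b_ad).
have [a_inf _ _ _ ab] := stage_good xa; have Fa : family a by exists x.
have a_ne_b : a <> b by move=> eab; apply: b_new; rewrite -eab.
have [N hN] := G_ad a b (FG a Fa) Gb a_ne_b.
by apply: a_inf; exists N => y ay; apply: hN; split=> //; apply: ab.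
Qed.

Lemma family_not_katetov : ~ katetov_le (ideal_gen family) Zideal.
Proof.
move=> [f katetov]; pose x := task True (graph f).
have [c c_cof] := before_cofinal x.
have [|a xa] := stage_some (good_not_katetov c_cof (@before_thin x) _).
  by move=> A /(ideal_gen_mono (@before_family x)) /katetov.
have [_ _ _ a_not_Z _] := stage_good xa; apply: a_not_Z => //.
rewrite -[task_data _]/(graph f) decode_graph.
by apply: katetov; apply: ideal_gen_mem; exists x.
Qed.

Lemma family_not_shelah_steprans : ~ shelah_steprans_block family.
Proof.
move=> SS; have block_pos : in_fin_pos (ideal_gen family) block.
  by move=> A /family_thin [/(_ 0) [n _ nA] _]; exists n.
have [W [W_inf W_small]] := SS block block_seq_block block_pos.
have [_ /(_ 1) [N hN]] := family_thin W_small.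
have [n Nn Wn] : exists2 n, N <= n & W n.
  apply: contrapT => none; apply: W_inf; exists N => n Wn.
  by case: (ltnP n N) => // Nn; case: none; exists n.
have [y] : exists y, y \in free_part (fun x => exists2 n, W n & x \in block n) n.
  by move: (hN n Nn); case: free_part => // y s _; exists y; rewrite mem_head.
by rewrite mem_free_part => /andP[yn /asboolPn []]; exists n.
Qed.

Lemma exists_Z_MAD_not_shelah_steprans : exists F, Z_MAD F /\ ~ shelah_steprans_block F.
Proof.
exists family; split; last exact: family_not_shelah_steprans.
by split; [exact: family_MAD | exact: family_not_katetov].
Qed.

End Recursion.

Section WellOrder.
Variables (T : eqType) (R : rel T).
Hypothesis R_wo : well_order R.

Lemma well_order_min (A : T -> Prop) :
  (exists x, A x) -> exists2 z, A z & forall x, A x -> R z x.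
Proof.
move=> [x Ax]; have [|z [[/asboolP Az lbz] _]] := @R_wo [pred z | `[< A z >]].
  by exists x; apply/asboolP.
by exists z => // y Ay; apply: lbz; apply/asboolP.
Qed.

Let R_chain : wo_chain R predT. Proof. exact: withinW. Qed.

Lemma well_order_total : total R.
Proof. by move=> x y; apply: (wo_chainW R_chain). Qed.

Lemma well_order_anti : antisymmetric R.
Proof. by move=> x y; apply: (wo_chain_antisymmetric R_chain). Qed.

Lemma well_order_trans : transitive R.
Proof.
move=> y x z Rxy Ryz.
pose A w := [\/ w = x, w = y | w = z].
have [w w3 wmin] := well_order_min (ex_intro A x (Or31 _ _ erefl)).
have Rwx := wmin x (Or31 _ _ erefl); have Rwy := wmin y (Or32 _ _ erefl).
have Rwz := wmin z (Or33 _ _ erefl).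
case: w3 => ?; subst w.
- exact: Rwz.
- by have -> : x = y by apply: well_order_anti; rewrite Rxy Rwx.
- by have <- : y = z by apply: well_order_anti; rewrite Ryz Rwy.
Qed.

Lemma well_order_strict_wf : well_founded (fun x y => R x y /\ x <> y).
Proof.
move=> x; apply: contrapT => x_nacc.
have [z z_nacc zmin] := well_order_min (ex_intro (fun w => ~ Acc _ w) x x_nacc).
apply: z_nacc; constructor => w [Rwz wz]; apply: contrapT => w_nacc.
by apply: wz; apply: well_order_anti; rewrite Rwz zmin.
Qed.

End WellOrder.

(* Pull the well-order back along an injection of P(omega) into the least initial
   segment of size continuum, given by CH; all initial segments become countable. *)
Lemma CH_ordering : CH -> exists prec : nset -> nset -> Prop,
  [/\ well_founded prec, (forall x y z, prec x y -> prec y z -> prec x z),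
      (forall x y, x <> y -> prec x y \/ prec y x) &
      forall x, countable_family (fun y => prec y x)].
Proof.
move=> HCH; have [R R_wo] := well_ordering_principle nset.
pose lt0 x y := R x y /\ x <> y.
have lt0_trans x y z : lt0 x y -> lt0 y z -> lt0 x z.
  move=> [Rxy xy] [Ryz yz]; split; first exact: well_order_trans Rxy Ryz.
  by move=> xz; subst z; apply: xy; apply: well_order_anti R_wo _ _ _; rewrite Rxy.
have [g g_inj g_small] : exists2 g : nset -> nset, injective g &
    forall y, countable_family (fun w => lt0 w (g y)).
  have [big | small] := pselect (exists z, ~ countable_family (fun w => lt0 w z)).
  - have [z z_big z_min] := well_order_min R_wo big.
    have [//|[g [g_below g_inj]]] := HCH (fun w => lt0 w z).
    exists g => // y; apply: contrapT => /z_min Rz; have [Rgz gz] := g_below y.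
    by apply: gz; apply: well_order_anti R_wo _ _ _; rewrite Rgz Rz.
  - exists id => // y; apply: contrapT => y_big; by apply: small; exists y.
exists (fun x y => lt0 (g x) (g y)); split.
- exact: wf_inverse_image (well_order_strict_wf R_wo).
- by move=> x y z; apply: lt0_trans.
- move=> x y xy; have gxy : g x <> g y by move/g_inj.
  by case/orP: (well_order_total R_wo (g x) (g y)); [left | right; split=> // /esym].
move=> x; have [e e_enum] := g_small x.
exists (fun n => if pselect (exists y, g y = e n) is left ex then projT1 (cid ex) else x).
move=> y /e_enum [n en]; exists n; case: pselect => [ex | []]; last by exists y.
by case: (cid ex) => y' /= gy'; apply: g_inj; rewrite gy'.
Qed.

Theorem mainTheorem17 :
  CH -> exists F : nfamily, Z_MAD F /\ ~ shelah_steprans_block F.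
Proof.
move=> /CH_ordering [prec [prec_wf prec_trans prec_total prec_countable]].
exact: exists_Z_MAD_not_shelah_steprans prec_wf prec_trans prec_total prec_countable.
Qed.
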